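(* Let $(A,E,\langle\!\langle-,-\rangle\!\rangle,\partial,[\![-,-]\!])$ be a double Courant--Dorfman algebra. Then for all $e,f,g\in E$ the following identities hold (Sweedler summation understood): $$\begin{aligned}&[\![e,[\![f,g]\!]''_r]\!]'_l\otimes[\![e,[\![f,g]\!]''_r]\!]''_l\otimes[\![f,g]\!]'_r=\partial[\![e,f]\!]'_r\otimes\langle\!\langle g,[\![e,f]\!]''_r\rangle\!\rangle'\otimes\langle\!\langle g,[\![e,f]\!]''_r\rangle\!\rangle''\\&\qquad+[\![f,[\![e,g]\!]'_l]\!]''_r\otimes[\![e,g]\!]''_l\otimes[\![f,[\![e,g]\!]'_l]\!]'_r-[\![e,f]\!]'_l\otimes\langle\!\langle g,\partial[\![e,f]\!]''_l\rangle\!\rangle'\otimes\langle\!\langle g,\partial[\![e,f]\!]''_l\rangle\!\rangle'',\end{aligned}$$ $$\begin{aligned}&[\![e,[\![f,g]\!]''_r]\!]'_r\otimes[\![e,[\![f,g]\!]''_r]\!]''_r\otimes[\![f,g]\!]'_r=[\![e,f]\!]'_r\otimes\partial\langle\!\langle g,[\![e,f]\!]''_r\rangle\!\rangle'\otimes\langle\!\langle g,[\![e,f]\!]''_r\rangle\!\rangle''\\&\qquad+\langle\!\langle f,\partial[\![e,g]\!]'_r\rangle\!\rangle''\otimes[\![e,g]\!]''_r\otimes\langle\!\langle f,\partial[\![e,g]\!]'_r\rangle\!\rangle'-[\![e,f]\!]'_r\otimes[\![g,[\![e,f]\!]''_r]\!]'_l\otimes[\![g,[\![e,f]\!]''_r]\!]''_l,\end{aligned}$$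 $$\begin{aligned}&\langle\!\langle e,\partial[\![f,g]\!]''_l\rangle\!\rangle'\otimes\langle\!\langle e,\partial[\![f,g]\!]''_l\rangle\!\rangle''\otimes[\![f,g]\!]'_l=[\![e,f]\!]'_r\otimes\langle\!\langle g,[\![e,f]\!]''_r\rangle\!\rangle'\otimes\partial\langle\!\langle g,[\![e,f]\!]''_r\rangle\!\rangle''\\&\qquad+[\![f,[\![e,g]\!]'_l]\!]''_l\otimes[\![e,g]\!]''_l\otimes[\![f,[\![e,g]\!]'_l]\!]'_l-[\![e,f]\!]'_r\otimes[\![g,[\![e,f]\!]''_r]\!]'_r\otimes[\![g,[\![e,f]\!]''_r]\!]''_r.\end{aligned}$$
   Context: All algebras are associative unital $\Bbbk$-algebras, $\Bbbk$ a field of characteristic zero, $\otimes=\otimes_\Bbbk$. Sweedler notation: $x=x'\otimes x''$ with summation suppressed; $(x'\otimes x'')^\sigma=x''\otimes x'$. Outer structure on $A\otimes A$, $E\otimes A$, $A\otimes E$: $a(x'\otimes x'')b=ax'\otimes x''b$; inner structure on $A\otimes A$: $a*(x'\otimes x'')*b=x'b\otimes ax''$. For $x=x'\otimes x''$ and $y$: $x\otimes_1y:=x'\otimes y\otimes x''$, $y\otimes_1x:=x'\otimes y\otimes x''$. $A$ is an algebra, $E$ an $A$-bimodule, $\partial\colon A\to E$ a derivation, acting on $A\otimes A$ by $\partial(x'\otimes x'')=\partial x'\otimes x''+x'\otimes\partial x''$. A pairing $\langle\!\langle-,-\rangle\!\rangle\colon E\otimes E\to A\otimes A$ is linear with $f\mapsto\langle\!\langle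 e,f\rangle\!\rangle$ a bimodule map to $(A\otimes A)_{\mathrm{out}}$ and $f\mapsto\langle\!\langle f,e\rangle\!\rangle$ a bimodule map to $(A\otimes A)_{\mathrm{inn}}$; symmetric: $\langle\!\langle e,f\rangle\!\rangle=\langle\!\langle f,e\rangle\!\rangle^\sigma$. Extensions: $\langle\!\langle e,f\otimes a\rangle\!\rangle_L=\langle\!\langle e,f\rangle\!\rangle\otimes a$, $\langle\!\langle e,a\otimes f\rangle\!\rangle_L=0$, $\langle\!\langle e,a\otimes f\rangle\!\rangle_R=a\otimes\langle\!\langle e,f\rangle\!\rangle$, $\langle\!\langle e,f\otimes a\rangle\!\rangle_R=0$, $\langle\!\langle e\otimes a,f\rangle\!\rangle_L=\langle\!\langle a\otimes e,f\rangle\!\rangle_R=\langle\!\langle e,f\rangle\!\rangle'\otimes a\otimes\langle\!\langle e,f\rangle\!\rangle''$, $\langle\!\langle a\otimes e,f\rangle\!\rangle_L=\langle\!\langle e\otimes a,f\rangle\!\rangle_R=0$. A double Courant--Dorfman bracket is a linear map $[\![-,-]\!]\colon T_AE\otimes T_AE\to T_AE\otimes T_AE$ of degree $-1$ ($T_AE$ the tensor algebra, $E$ in degree 1) with $[\![e,a]\!]=\langle\!\langle e,\partial a\rangle\!\rangle$, $[\![a,e]\!]=-\langle\!\langle\partial a,e\rangle\!\rangle$, $[\![a,b]\!]=0$; for $e,f\in E$, $[\![e,f]\!]=[\![e,f]\!]_l+[\![e,f]\!]_r\in E\otimes A\oplus A\otimes E$ with $[\![e,f]\!]_l=[\![e,f]\!]'_l\otimes[\![e,f]\!]''_l$,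 $[\![e,f]\!]_r=[\![e,f]\!]'_r\otimes[\![e,f]\!]''_r$. Extensions: $[\![e,f\otimes a]\!]_L=[\![e,f]\!]\otimes a$, $[\![e,a\otimes f]\!]_L=\langle\!\langle e,\partial a\rangle\!\rangle\otimes f$, $[\![e,f\otimes a]\!]_R=f\otimes\langle\!\langle e,\partial a\rangle\!\rangle$, $[\![e,a\otimes f]\!]_R=a\otimes[\![e,f]\!]$, $[\![e\otimes a,f]\!]_L=[\![e,f]\!]\otimes_1a+\langle\!\langle e,f\rangle\!\rangle\otimes_1\partial a$, $[\![a\otimes e,f]\!]_L=-\langle\!\langle\partial a,f\rangle\!\rangle\otimes_1e$. A double Courant--Dorfman algebra is $(A,E,\langle\!\langle-,-\rangle\!\rangle,\partial,[\![-,-]\!])$ with symmetric pairing, derivation and double Courant--Dorfman bracket such that for all $a,b\in A$, $e,f,g\in E$: $\partial\langle\!\langle e,f\rangle\!\rangle=[\![e,f]\!]+[\![f,e]\!]^\sigma$; $[\![\partial a,e]\!]=0$; $\langle\!\langle\partial a,\partial b\rangle\!\rangle=0$; $[\![e,fa]\!]=[\![e,f]\!]a+f\langle\!\langle e,\partial a\rangle\!\rangle$; $[\![e,af]\!]=a[\![e,f]\!]+\langle\!\langle e,\partial a\rangle\!\rangle f$; $[\![e,[\![f,g]\!]]\!]_L=[\![f,[\![e,g]\!]]\!]_R+[\![[\![e,f]\!],g]\!]_L$; $\langle\!\langle e,\partial\langle\!\langle f,g\rangle\!\rangle\rangle\!\rangle_L=\langle\!\langle f,[\![e,g]\!]\rangle\!\rangle_R+\langle\!\langle[\![e,f]\!],g\rangle\!\rangle_L$.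 *)

(* Tensor products over k are modelled as formal sums
   (sequences of pure tensors) modulo the universal-property equivalence:
   two formal sums are equal in U (x) V iff every k-bilinear map out of
   U x V takes the same value on them (resp. trilinear for triple tensors). *)
From HB Require Import structures.
From mathcomp Require Import all_boot all_order all_algebra.
Set Implicit Arguments.
Unset Strict Implicit.
Unset Printing Implicit Defensive.
Import Order.TTheory GRing.Theory Num.Theory.
Local Open Scope ring_scope.

Definition bilin (k : fieldType) (U V M : lmodType k) (phi : U -> V -> M) : Prop :=
  (forall (c : k) (u1 u2 : U) (v : V), phi (c *: u1 + u2) v = c *: phi u1 v + phi u2 v) /\
  (forall (c : k) (u : U) (v1 v2 : V), phi u (c *: v1 + v2) = c *: phi u v1 + phi u v2).

Definition trilin (k : fieldType) (U V W M : lmodType k) (phi : U -> V -> W -> M) : Prop :=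
  (forall (c : k) (u1 u2 : U) (v : V) (w : W),
      phi (c *: u1 + u2) v w = c *: phi u1 v w + phi u2 v w) /\
  (forall (c : k) (u : U) (v1 v2 : V) (w : W),
      phi u (c *: v1 + v2) w = c *: phi u v1 w + phi u v2 w) /\
  (forall (c : k) (u : U) (v : V) (w1 w2 : W),
      phi u v (c *: w1 + w2) = c *: phi u v w1 + phi u v w2).

(* an element sum_i u_i (x) v_i of U (x) V is represented by [:: (u_i, v_i); ...] *)
Definition teq2 (k : fieldType) (U V : lmodType k) (s t : seq (U * V)) : Prop :=
  forall (M : lmodType k) (phi : U -> V -> M), bilin phi ->
    \sum_(p <- s) phi p.1 p.2 = \sum_(p <- t) phi p.1 p.2.

Definition teq3 (k : fieldType) (U V W : lmodType k) (s t : seq (U * V * W)) : Prop :=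
  forall (M : lmodType k) (phi : U -> V -> W -> M), trilin phi ->
    \sum_(p <- s) phi p.1.1 p.1.2 p.2 = \sum_(p <- t) phi p.1.1 p.1.2 p.2.

Notation "s =t2 t" := (teq2 s t) (at level 70, no associativity).
Notation "s =t3 t" := (teq3 s t) (at level 70, no associativity).

Definition tscale (k : fieldType) (U : lmodType k) (V : Type) (c : k) (s : seq (U * V)) :
  seq (U * V) := [seq (c *: p.1, p.2) | p <- s].

(* sigma : x' (x) x'' |-> x'' (x) x' *)
Definition tswap (U V : Type) (s : seq (U * V)) : seq (V * U) := [seq (p.2, p.1) | p <- s].

Definition is_bimod (k : fieldType) (A : algType k) (E : lmodType k)
  (lact : A -> E -> E) (ract : E -> A -> E) : Prop :=
  (forall (c : k) (a1 a2 : A) (x : E), lact (c *: a1 + a2) x = c *: lact a1 x + lact a2 x) /\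
  (forall (c : k) (a : A) (x1 x2 : E), lact a (c *: x1 + x2) = c *: lact a x1 + lact a x2) /\
  (forall (c : k) (a1 a2 : A) (x : E), ract x (c *: a1 + a2) = c *: ract x a1 + ract x a2) /\
  (forall (c : k) (a : A) (x1 x2 : E), ract (c *: x1 + x2) a = c *: ract x1 a + ract x2 a) /\
  (forall x : E, lact 1 x = x) /\ (forall x : E, ract x 1 = x) /\
  (forall (a b : A) (x : E), lact (a * b) x = lact a (lact b x)) /\
  (forall (a b : A) (x : E), ract x (a * b) = ract (ract x a) b) /\
  (forall (a b : A) (x : E), ract (lact a x) b = lact a (ract x b)).

Definition is_derivation (k : fieldType) (A : algType k) (E : lmodType k)
  (lact : A -> E -> E) (ract : E -> A -> E) (del : A -> E) : Prop :=
  (forall (c : k) (a b : A), del (c *: a + b) = c *: del a + del b) /\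
  (forall a b : A, del (a * b) = ract (del a) b + lact a (del b)).

Definition is_sym_pairing (k : fieldType) (A : algType k) (E : lmodType k)
  (lact : A -> E -> E) (ract : E -> A -> E) (pr : E -> E -> seq (A * A)) : Prop :=
  (forall (c : k) (e1 e2 f : E), pr (c *: e1 + e2) f =t2 tscale c (pr e1 f) ++ pr e2 f) /\
  (forall (c : k) (e f1 f2 : E), pr e (c *: f1 + f2) =t2 tscale c (pr e f1) ++ pr e f2) /\
  (* f |-> <<e,f>> is a bimodule map to the outer structure *)
  (forall (e f : E) (a b : A),
      pr e (lact a (ract f b)) =t2 [seq (a * p.1, p.2 * b) | p <- pr e f]) /\
  (* f |-> <<f,e>> is a bimodule map to the inner structure *)
  (forall (e f : E) (a b : A),
      pr (lact a (ract f b)) e =t2 [seq (p.1 * b, a * p.2) | p <- pr f e]) /\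
  (forall e f : E, pr e f =t2 tswap (pr f e)).

(* ---------- double Courant--Dorfman algebra ----------
   The bracket of two elements e f of E is
     [[e,f]] = [[e,f]]_l + [[e,f]]_r  with  [[e,f]]_l = brl e f in E (x) A,
                                            [[e,f]]_r = brr e f in A (x) E;
   on mixed degrees it is determined by [[e,a]] = <<e, del a>>,
   [[a,e]] = - <<del a, e>>, [[a,b]] = 0, and the extensions _L, _R are
   unfolded below according to their defining formulas. *)
Definition is_DCD (k : fieldType) (A : algType k) (E : lmodType k)
  (lact : A -> E -> E) (ract : E -> A -> E) (pr : E -> E -> seq (A * A)) (del : A -> E)
  (brl : E -> E -> seq (E * A)) (brr : E -> E -> seq (A * E)) : Prop :=
  is_bimod lact ract /\ is_derivation lact ract del /\ is_sym_pairing lact ract pr /\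
  (forall (c : k) (e1 e2 f : E), brl (c *: e1 + e2) f =t2 tscale c (brl e1 f) ++ brl e2 f) /\
  (forall (c : k) (e1 e2 f : E), brr (c *: e1 + e2) f =t2 tscale c (brr e1 f) ++ brr e2 f) /\
  (forall (c : k) (e f1 f2 : E), brl e (c *: f1 + f2) =t2 tscale c (brl e f1) ++ brl e f2) /\
  (forall (c : k) (e f1 f2 : E), brr e (c *: f1 + f2) =t2 tscale c (brr e f1) ++ brr e f2) /\
  (* del <<e,f>> = [[e,f]] + [[f,e]]^sigma  (E(x)A and A(x)E components) *)
  (forall e f : E,
      [seq (del p.1, p.2) | p <- pr e f] =t2 brl e f ++ tswap (brr f e)) /\
  (forall e f : E,
      [seq (p.1, del p.2) | p <- pr e f] =t2 brr e f ++ tswap (brl f e)) /\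
  (forall (a : A) (e : E), brl (del a) e =t2 [::]) /\
  (forall (a : A) (e : E), brr (del a) e =t2 [::]) /\
  (forall a b : A, pr (del a) (del b) =t2 [::]) /\
  (* [[e, f a]] = [[e,f]] a + f <<e, del a>> *)
  (forall (e f : E) (a : A),
      brl e (ract f a) =t2
        [seq (p.1, p.2 * a) | p <- brl e f] ++ [seq (ract f p.1, p.2) | p <- pr e (del a)]) /\
  (forall (e f : E) (a : A),
      brr e (ract f a) =t2 [seq (p.1, ract p.2 a) | p <- brr e f]) /\
  (* [[e, a f]] = a [[e,f]] + <<e, del a>> f *)
  (forall (e f : E) (a : A),
      brl e (lact a f) =t2 [seq (lact a p.1, p.2) | p <- brl e f]) /\
  (forall (e f : E) (a : A),
      brr e (lact a f) =t2
        [seq (a * p.1, p.2) | p <- brr e f] ++ [seq (p.1, lact p.2 f) | p <- pr e (del a)]) /\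
  (* [[e,[[f,g]]]]_L = [[f,[[e,g]]]]_R + [[[[e,f]],g]]_L,
     component in E (x) A (x) A *)
  (forall e f g : E,
      [seq (q.1, q.2, p.2) | p <- brl f g, q <- brl e p.1] =t3
        [seq (p.1, q.1, q.2) | p <- brl e g, q <- pr f (del p.2)]
        ++ [seq (q.1, p.2, q.2) | p <- brl e f, q <- brl p.1 g]) /\
  (*   component in A (x) E (x) A *)
  (forall e f g : E,
      [seq (q.1, q.2, p.2) | p <- brl f g, q <- brr e p.1] =t3
        [seq (p.1, q.1, q.2) | p <- brr e g, q <- brl f p.2]
        ++ [seq (q.1, del p.2, q.2) | p <- brl e f, q <- pr p.1 g]
        ++ [seq (- q.1, p.2, q.2) | p <- brr e f, q <- pr (del p.1) g]) /\
  (*   component in A (x) A (x) E *)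
  (forall e f g : E,
      [seq (q.1, q.2, p.2) | p <- brr f g, q <- pr e (del p.1)] =t3
        [seq (p.1, q.1, q.2) | p <- brr e g, q <- brr f p.2]
        ++ [seq (q.1, p.2, q.2) | p <- brl e f, q <- brr p.1 g]) /\
  (* <<e, del <<f,g>> >>_L = <<f,[[e,g]]>>_R + <<[[e,f]],g>>_L  in A (x) A (x) A *)
  (forall e f g : E,
      [seq (q.1, q.2, p.2) | p <- pr f g, q <- pr e (del p.1)] =t3
        [seq (p.1, q.1, q.2) | p <- brr e g, q <- pr f p.2]
        ++ [seq (q.1, p.2, q.2) | p <- brl e f, q <- pr p.1 g]).

From HB Require Import structures.
From mathcomp Require Import all_boot all_order all_algebra.
Import GRing.Theory.
Local Open Scope ring_scope.

Set Implicit Arguments.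
Unset Strict Implicit.

(* Each identity is a component of [[e,-]] (or of <<e, del ->>) applied to
   [[f,g]] = del <<f,g>> - [[g,f]]^sigma.  On the term coming from del <<f,g>>,
   the bracket reduces to a pairing because [[del a, -]] = 0, and symmetry plus
   the Leibniz rule for the pairing expand it in terms of [[e,f]] and [[e,g]];
   the term coming from [[g,f]]^sigma is expanded by the Jacobi identity, and
   the two expansions share a summand that cancels. *)

Lemma linear_id {k : fieldType} {X : lmodType k} : linear (fun x : X => x).
Proof. by []. Qed.

Section Multilinear.

Variable k : fieldType.
Implicit Types U V W X Y M : lmodType k.

Definition tlinear X U V (G : X -> seq (U * V)) : Prop :=
  forall (c : k) (x y : X), G (c *: x + y) =t2 tscale c (G x) ++ G y.

Lemma bilinZl U V M (B : U -> V -> M) c u v : bilin B -> B (c *: u) v = c *: B u v.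
Proof.
move=> [linB _]; have B0 : B 0 v = 0 by have := linB (-1) u u v; rewrite !scaleN1r !addNr.
by have := linB c u 0 v; rewrite !addr0 B0 addr0.
Qed.

Lemma bilin_swap U V M (B : U -> V -> M) : bilin B -> bilin (fun v u => B u v).
Proof. by case. Qed.

Lemma trilin_rot U V W M (phi : U -> V -> W -> M) :
  trilin phi -> trilin (fun w u v => phi u v w).
Proof.
by case=> [lin1 [lin2 lin3]]; split; [|split]=> c *; [apply: lin3|apply: lin1|apply: lin2].
Qed.

Lemma trilin_slice12 U V W M (phi : U -> V -> W -> M) w :
  trilin phi -> bilin (fun u v => phi u v w).
Proof. by case=> [lin1 [lin2 _]]. Qed.

Lemma trilin_slice13 U V W M (phi : U -> V -> W -> M) v :
  trilin phi -> bilin (fun u w => phi u v w).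
Proof. by case=> [lin1 [_ lin3]]. Qed.

Lemma trilin_comp U V W U' V' W' M (phi : U -> V -> W -> M)
    (f1 : U' -> U) (f2 : V' -> V) (f3 : W' -> W) :
  linear f1 -> linear f2 -> linear f3 -> trilin phi ->
  trilin (fun x y z => phi (f1 x) (f2 y) (f3 z)).
Proof.
move=> lf1 lf2 lf3 [lin1 [lin2 lin3]].
by split; [|split] => c *; rewrite ?lf1 ?lin1 ?lf2 ?lin2 ?lf3 ?lin3.
Qed.

Lemma trilinNl U V W M (phi : U -> V -> W -> M) u v w :
  trilin phi -> phi (- u) v w = - phi u v w.
Proof.
by move=> /(trilin_slice13 v) linphi; rewrite -scaleN1r (bilinZl _ _ _ linphi) scaleN1r.
Qed.

Lemma sum_tscale U V M (B : U -> V -> M) c s :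
  bilin B -> \sum_(p <- tscale c s) B p.1 p.2 = c *: \sum_(p <- s) B p.1 p.2.
Proof. by move=> linB; rewrite big_map scaler_sumr; apply: eq_bigr => p _; apply: bilinZl. Qed.

Lemma tlinear_sum X U V M (G : X -> seq (U * V)) (B : U -> V -> M) :
  tlinear G -> bilin B -> linear (fun x => \sum_(q <- G x) B q.1 q.2).
Proof. by move=> linG linB c x y; rewrite (linG c x y _ B linB) big_cat sum_tscale. Qed.

Lemma bilin_nested_sum X Y U V M (G : Y -> seq (U * V)) (phi : X -> U -> V -> M) :
  tlinear G -> trilin phi -> bilin (fun x y => \sum_(q <- G y) phi x q.1 q.2).
Proof.
move=> linG [lin1 [lin2 lin3]]; split=> [c x1 x2 y | c x].
  by rewrite scaler_sumr -big_split; apply: eq_bigr => q _; apply: lin1.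
apply: (tlinear_sum (B := phi x) linG); split=> *; [apply: lin2|apply: lin3].
Qed.

Lemma nested_sum_teq2 X Y U V M (G : Y -> seq (U * V)) (phi : U -> V -> X -> M)
    (s t : seq (X * Y)) :
  tlinear G -> trilin phi -> s =t2 t ->
  \sum_(p <- s) \sum_(q <- G p.2) phi q.1 q.2 p.1 =
    \sum_(p <- t) \sum_(q <- G p.2) phi q.1 q.2 p.1.
Proof. by move=> linG linphi st; exact: st _ _ (bilin_nested_sum linG (trilin_rot linphi)). Qed.

Lemma nested_sum_trilinNl (I J : Type) U V W M (phi : U -> V -> W -> M)
    (s : seq I) (G : I -> seq J) (u : I -> J -> U) (v : I -> J -> V) (w : I -> J -> W) :
  trilin phi ->
  \sum_(p <- s) \sum_(q <- G p) phi (- u p q) (v p q) (w p q) =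
    - \sum_(p <- s) \sum_(q <- G p) phi (u p q) (v p q) (w p q).
Proof.
move=> linphi; rewrite -sumrN; apply: eq_bigr => p _.
by rewrite -sumrN; apply: eq_bigr => q _; apply: trilinNl.
Qed.

End Multilinear.

Section DoubleCourantDorfman.

Variables (k : fieldType) (A : algType k) (E : lmodType k).
Variables (pr : E -> E -> seq (A * A)) (del : A -> E).
Variables (brl : E -> E -> seq (E * A)) (brr : E -> E -> seq (A * E)).

Hypothesis del_linear : linear del.
Hypothesis pr_linear : forall e, tlinear (pr e).
Hypothesis pr_sym : forall e f, pr e f =t2 tswap (pr f e).
Hypothesis brl_linear : forall e, tlinear (brl e).
Hypothesis brr_linear : forall e, tlinear (brr e).
Hypothesis del_prEA :
  forall e f, [seq (del p.1, p.2) | p <- pr e f] =t2 brl e f ++ tswap (brr f e).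
Hypothesis del_prAE :
  forall e f, [seq (p.1, del p.2) | p <- pr e f] =t2 brr e f ++ tswap (brl f e).
Hypothesis brl_dell : forall a e, brl (del a) e =t2 [::].
Hypothesis brr_dell : forall a e, brr (del a) e =t2 [::].
Hypothesis jacobiEAA : forall e f g,
  [seq (q.1, q.2, p.2) | p <- brl f g, q <- brl e p.1] =t3
    [seq (p.1, q.1, q.2) | p <- brl e g, q <- pr f (del p.2)]
    ++ [seq (q.1, p.2, q.2) | p <- brl e f, q <- brl p.1 g].
Hypothesis jacobiAEA : forall e f g,
  [seq (q.1, q.2, p.2) | p <- brl f g, q <- brr e p.1] =t3
    [seq (p.1, q.1, q.2) | p <- brr e g, q <- brl f p.2]
    ++ [seq (q.1, del p.2, q.2) | p <- brl e f, q <- pr p.1 g]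
    ++ [seq (- q.1, p.2, q.2) | p <- brr e f, q <- pr (del p.1) g].
Hypothesis jacobiAAE : forall e f g,
  [seq (q.1, q.2, p.2) | p <- brr f g, q <- pr e (del p.1)] =t3
    [seq (p.1, q.1, q.2) | p <- brr e g, q <- brr f p.2]
    ++ [seq (q.1, p.2, q.2) | p <- brl e f, q <- brr p.1 g].
Hypothesis pr_leibniz : forall e f g,
  [seq (q.1, q.2, p.2) | p <- pr f g, q <- pr e (del p.1)] =t3
    [seq (p.1, q.1, q.2) | p <- brr e g, q <- pr f p.2]
    ++ [seq (q.1, p.2, q.2) | p <- brl e f, q <- pr p.1 g].

Lemma pr_del_linear e : tlinear (fun a => pr e (del a)).
Proof. by move=> c a b; rewrite del_linear; apply: pr_linear. Qed.

Lemma brl_delr e a : brl e (del a) =t2 [seq (del p.1, p.2) | p <- pr e (del a)].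
Proof.
move=> M B linB; rewrite (del_prEA e (del a) linB) big_cat big_map /=.
by rewrite (brr_dell a e (bilin_swap linB)) big_nil addr0.
Qed.

Lemma brr_delr e a : brr e (del a) =t2 [seq (p.1, del p.2) | p <- pr e (del a)].
Proof.
move=> M B linB; rewrite (del_prAE e (del a) linB) big_cat big_map /=.
by rewrite (brl_dell a e (bilin_swap linB)) big_nil addr0.
Qed.

Lemma pr_del_of_pr e f g :
  [seq (q.1, q.2, p.1) | p <- pr f g, q <- pr e (del p.2)] =t3
    [seq (p.1, q.1, q.2) | p <- brr e f, q <- pr g p.2]
    ++ [seq (q.1, p.2, q.2) | p <- brl e g, q <- pr p.1 f].
Proof.
move=> M phi linphi; rewrite -(pr_leibniz e g f linphi) !big_allpairs_dep.
by rewrite (nested_sum_teq2 (pr_del_linear e) linphi (pr_sym f g)) big_map.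
Qed.

Lemma brl_of_brr e f g :
  [seq (q.1, q.2, p.1) | p <- brr f g, q <- brl e p.2] =t3
    [seq (del p.1, q.1, q.2) | p <- brr e f, q <- pr g p.2]
    ++ [seq (q.2, p.2, q.1) | p <- brl e g, q <- brr f p.1]
    ++ [seq (- p.1, q.1, q.2) | p <- brl e f, q <- pr g (del p.2)].
Proof.
move=> M phi linphi; rewrite !big_cat !big_allpairs_dep /=.
rewrite (nested_sum_trilinNl _ _ _ _ _ linphi).
have linphi_del : trilin (fun x a b => phi (del x) a b).
  exact: trilin_comp del_linear linear_id linear_id linphi.
have del_fg := nested_sum_teq2 (brl_linear e) linphi (del_prAE f g).
rewrite big_cat !big_map /= in del_fg.
have brl_e_del : \sum_(j <- pr f g) \sum_(q <- brl e (del j.2)) phi q.1 q.2 j.1 =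
    \sum_(j <- pr f g) \sum_(q <- pr e (del j.2)) phi (del q.1) q.2 j.1.
  by apply: eq_bigr => j _; rewrite (brl_delr e j.2 (trilin_slice12 j.1 linphi)) big_map.
have del_pr_f : \sum_(p <- brl e g) \sum_(q <- pr p.1 f) phi (del q.1) p.2 q.2 =
    \sum_(p <- brl e g) \sum_(q <- brl p.1 f) phi q.1 p.2 q.2 +
    \sum_(p <- brl e g) \sum_(q <- brr f p.1) phi q.2 p.2 q.1.
  rewrite -big_split; apply: eq_bigr => p _.
  by have := del_prEA p.1 f (trilin_slice13 p.2 linphi); rewrite big_cat !big_map.
have := pr_del_of_pr e f g linphi_del; rewrite big_cat !big_allpairs_dep /=.
rewrite -brl_e_del del_fg del_pr_f => /(canRL (addrK _)) ->.
have := jacobiEAA e g f linphi; rewrite big_cat !big_allpairs_dep /= => ->.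
set z := \sum_(i <- brl e f) _; set x := \sum_(i <- brl e g) \sum_(q <- brl i.1 f) _.
by rewrite [z + x]addrC [x + _]addrC addrA addrKA addrA.
Qed.

Lemma brr_of_brr e f g :
  [seq (q.1, q.2, p.1) | p <- brr f g, q <- brr e p.2] =t3
    [seq (p.1, del q.1, q.2) | p <- brr e f, q <- pr g p.2]
    ++ [seq (q.2, p.2, q.1) | p <- brr e g, q <- pr f (del p.1)]
    ++ [seq (- p.1, q.1, q.2) | p <- brr e f, q <- brl g p.2].
Proof.
move=> M phi linphi; rewrite !big_cat !big_allpairs_dep /=.
rewrite (nested_sum_trilinNl _ _ _ _ _ linphi).
have linphi_del : trilin (fun a x b => phi a (del x) b).
  exact: trilin_comp linear_id del_linear linear_id linphi.
have del_fg := nested_sum_teq2 (brr_linear e) linphi (del_prAE f g).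
rewrite big_cat !big_map /= in del_fg.
have brr_e_del : \sum_(j <- pr f g) \sum_(q <- brr e (del j.2)) phi q.1 q.2 j.1 =
    \sum_(j <- pr f g) \sum_(q <- pr e (del j.2)) phi q.1 (del q.2) j.1.
  by apply: eq_bigr => j _; rewrite (brr_delr e j.2 (trilin_slice12 j.1 linphi)) big_map.
have pr_del_sym : \sum_(p <- brr e g) \sum_(q <- pr (del p.1) f) phi (- q.1) p.2 q.2 =
    - \sum_(p <- brr e g) \sum_(q <- pr f (del p.1)) phi q.2 p.2 q.1.
  rewrite (nested_sum_trilinNl _ _ _ _ _ linphi); congr (- _); apply: eq_bigr => p _.
  by rewrite (pr_sym _ _ (trilin_slice13 p.2 linphi)) big_map.
have := pr_del_of_pr e f g linphi_del; rewrite big_cat !big_allpairs_dep /=.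
rewrite -brr_e_del del_fg => /(canRL (addrK _)) ->.
have := jacobiAEA e g f linphi; rewrite !big_cat !big_allpairs_dep /= pr_del_sym => ->.
set x := \sum_(i <- brl e g) _; set z := \sum_(i <- brr e f) \sum_(q <- brl g i.2) _.
set w := \sum_(i <- brr e g) _.
by rewrite -addrA; congr (_ + _); rewrite opprD opprB addrCA [w - x]addrC addNKr addrC.
Qed.

Lemma pr_del_of_brl e f g :
  [seq (q.1, q.2, p.1) | p <- brl f g, q <- pr e (del p.2)] =t3
    [seq (p.1, q.1, del q.2) | p <- brr e f, q <- pr g p.2]
    ++ [seq (q.2, p.2, q.1) | p <- brl e g, q <- brl f p.1]
    ++ [seq (- p.1, q.1, q.2) | p <- brr e f, q <- brr g p.2].
Proof.
move=> M phi linphi; rewrite !big_cat !big_allpairs_dep /=.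
rewrite (nested_sum_trilinNl _ _ _ _ _ linphi).
have linphi_del : trilin (fun a b x => phi a b (del x)).
  exact: trilin_comp linear_id linear_id del_linear linphi.
have del_fg := nested_sum_teq2 (pr_del_linear e) linphi (del_prEA f g).
rewrite big_cat !big_map /= in del_fg.
have del_pr_f : \sum_(p <- brl e g) \sum_(q <- pr p.1 f) phi q.1 p.2 (del q.2) =
    \sum_(p <- brl e g) \sum_(q <- brr p.1 f) phi q.1 p.2 q.2 +
    \sum_(p <- brl e g) \sum_(q <- brl f p.1) phi q.2 p.2 q.1.
  rewrite -big_split; apply: eq_bigr => p _.
  by have := del_prAE p.1 f (trilin_slice13 p.2 linphi); rewrite big_cat !big_map.
have := pr_del_of_pr e f g linphi_del; rewrite big_cat !big_allpairs_dep /=.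
rewrite del_fg del_pr_f => /(canRL (addrK _)) ->.
have := jacobiAAE e g f linphi; rewrite big_cat !big_allpairs_dep /= => ->.
set z := \sum_(i <- brr e f) \sum_(q <- brr g i.2) _.
set x := \sum_(i <- brl e g) \sum_(q <- brr i.1 f) _.
by rewrite [z + x]addrC [x + _]addrC addrA addrKA addrA.
Qed.

End DoubleCourantDorfman.

Theorem lemmaA2 (k : fieldType) (A : algType k) (E : lmodType k)
  (lact : A -> E -> E) (ract : E -> A -> E) (pr : E -> E -> seq (A * A)) (del : A -> E)
  (brl : E -> E -> seq (E * A)) (brr : E -> E -> seq (A * E)) :
  [pchar k] =i pred0 ->
  is_DCD lact ract pr del brl brr ->
  forall e f g : E,
    (* identity in E (x) A (x) A *)
    [seq (q.1, q.2, p.1) | p <- brr f g, q <- brl e p.2] =t3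
      [seq (del p.1, q.1, q.2) | p <- brr e f, q <- pr g p.2]
      ++ [seq (q.2, p.2, q.1) | p <- brl e g, q <- brr f p.1]
      ++ [seq (- p.1, q.1, q.2) | p <- brl e f, q <- pr g (del p.2)]
    /\
    (* identity in A (x) E (x) A *)
    [seq (q.1, q.2, p.1) | p <- brr f g, q <- brr e p.2] =t3
      [seq (p.1, del q.1, q.2) | p <- brr e f, q <- pr g p.2]
      ++ [seq (q.2, p.2, q.1) | p <- brr e g, q <- pr f (del p.1)]
      ++ [seq (- p.1, q.1, q.2) | p <- brr e f, q <- brl g p.2]
    /\
    (* identity in A (x) A (x) E *)
    [seq (q.1, q.2, p.1) | p <- brl f g, q <- pr e (del p.2)] =t3
      [seq (p.1, q.1, del q.2) | p <- brr e f, q <- pr g p.2]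
      ++ [seq (q.2, p.2, q.1) | p <- brl e g, q <- brl f p.1]
      ++ [seq (- p.1, q.1, q.2) | p <- brr e f, q <- brr g p.2].
Proof.
move=> _ [_ [[del_linear _] [[_ [pr_linear [_ [_ pr_sym]]]] DCD]]] e f g.
move: DCD => [_ [_ [brl_linear [brr_linear [del_prEA [del_prAE [brl_dell [brr_dell DCD]]]]]]]].
move: DCD => [_ [_ [_ [_ [_ [jacobiEAA [jacobiAEA [jacobiAAE pr_leibniz]]]]]]]].
have {}pr_linear e' : tlinear (pr e') by move=> c; apply: pr_linear.
have {}brl_linear e' : tlinear (brl e') by move=> c; apply: brl_linear.
have {}brr_linear e' : tlinear (brr e') by move=> c; apply: brr_linear.
split; [|split].
- exact: brl_of_brr.
- exact: brr_of_brr.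
- exact: pr_del_of_brl.
Qed.
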